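(* Let $m\ge 14$ and $T\subseteq[m]$. Suppose that $T$ contains a nonconsecutive subset of size $3$ and $[m]\setminus T$ contains a nonconsecutive subset of size $3$. Then there exist $3$ elements of $T$ and $3$ elements of $[m]\setminus T$ such that the set of these $6$ elements is nonconsecutive.
   Context: A set of integers is nonconsecutive if no two distinct elements differ by exactly $1$. *)

From mathcomp Require Import all_boot.
Set Implicit Arguments. Unset Strict Implicit. Unset Printing Implicit Defensive.

Definition in_range (m x : nat) : bool := (1 <= x <= m).

Definition nonconsecutive (s : seq nat) : Prop :=
  forall x y, x \in s -> y \in s -> x != y -> y != x.+1.

Definition subset_of_size (A : pred nat) (k : nat) (s : seq nat) : Prop :=
  uniq s /\ size s = k /\ all A s.

From mathcomp Require Import all_boot zify.

Set Implicit Arguments.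
Unset Strict Implicit.
Unset Printing Implicit Defensive.

(* Call a pair (i, j) feasible at n if some nonconsecutive subset of [1..n] has
   i elements in T and j outside T.  The feasible pairs at n are those at n - 1
   together with those obtained by adding n to a feasible pair at n - 2.
   Truncated to i, j <= 3, the last two tables of feasible pairs and the length n
   capped at 14 form a finite automaton reading the membership word of T.  Its
   294 reachable states can be enumerated, and in each of them with n >= 14
   the feasibility of (3, 0) and (0, 3) forces that of (3, 3). *)

Lemma nonconsecutive_sub (s1 s2 : seq nat) :
  {subset s1 <= s2} -> nonconsecutive s2 -> nonconsecutive s1.
Proof. by move=> s12 ncs2 x y /s12 xs /s12 ys; apply: ncs2. Qed.

Lemma nonconsecutive_cons (y : nat) (s : seq nat) :
  (forall x, x \in s -> x.+1 < y) -> nonconsecutive s -> nonconsecutive (y :: s).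
Proof.
move=> lt_sy ncs x z; rewrite !inE.
case/orP=> [/eqP-> | xs]; case/orP=> [/eqP-> | zs].
- by rewrite eqxx.
- by have := lt_sy z zs; lia.
- by have := lt_sy x xs; lia.
- exact: ncs.
Qed.

Definition selection (T : pred nat) (n i j : nat) (s : seq nat) : Prop :=
  [/\ uniq s, all (in_range n) s, nonconsecutive s,
      count T s = i & count (predC T) s = j].

Section Selection.

Variable T : pred nat.

Lemma selection_perm (n i j : nat) (s1 s2 : seq nat) :
  perm_eq s1 s2 -> selection T n i j s1 -> selection T n i j s2.
Proof.
move=> s12 [u1 r1 nc1 ci cj]; split.
- by rewrite -(perm_uniq s12).
- by rewrite -(perm_all _ s12).
- by apply: nonconsecutive_sub nc1 => x; rewrite (perm_mem s12).
- by rewrite -(permP s12).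
- by rewrite -(permP s12).
Qed.

Lemma selection_widen (n i j : nat) (s : seq nat) :
  selection T n i j s -> selection T n.+1 i j s.
Proof.
case=> u r nc ci cj; split=> //.
by apply/allP=> x /(allP r); rewrite /in_range; lia.
Qed.

Lemma selection_narrow (n i j : nat) (s : seq nat) :
  n.+1 \notin s -> selection T n.+1 i j s -> selection T n i j s.
Proof.
move=> ns [u r nc ci cj]; split=> //; apply/allP=> x xs.
have /negP: x != n.+1 by apply: contraNneq ns => <-.
by have := allP r x xs; rewrite /in_range; lia.
Qed.

Lemma selection_cons_top (n i j : nat) (s : seq nat) :
  selection T n.+1 (T n.+1 + i) (~~ T n.+1 + j) (n.+1 :: s) <-> selection T n.-1 i j s.
Proof.
split.
- case=> /= /andP[ns u] /andP[_ r] nc /addnI ci /addnI cj; split=> //; last first.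
    by apply: nonconsecutive_sub nc => x xs; rewrite inE xs orbT.
  apply/allP=> x xs; have xn : x != n.+1 by apply: contraNneq ns => <-.
  have := nc x n.+1; rewrite !inE xs eqxx orbT => /(_ isT isT xn).
  by move: xn (allP r x xs); rewrite /in_range; lia.
- case=> u r nc ci cj.
  have lt_sn x : x \in s -> x.+1 < n.+1 by move/(allP r); rewrite /in_range; lia.
  split=> /=; rewrite ?ci ?cj //.
  + by rewrite u andbT; apply/negP => /lt_sn; lia.
  + rewrite /in_range /= ltnSn; apply/allP=> x /(allP r); rewrite /in_range; lia.
  + exact: nonconsecutive_cons nc.
Qed.

Lemma selection_predC (n i j : nat) (s : seq nat) :
  selection (predC T) n i j s -> selection T n j i s.
Proof.
case=> u r nc ci cj; split=> //; rewrite -?ci -?cj.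
by apply: eq_count => x /=; rewrite negbK.
Qed.

Lemma selection_all (n : nat) (s : seq nat) :
  uniq s -> all (in_range n) s -> nonconsecutive s -> all T s -> selection T n (size s) 0 s.
Proof.
move=> u r nc sT; have cT : count T s = size s by apply/eqP; rewrite -all_count.
by split=> //; have := count_predC T s; lia.
Qed.

Lemma selection_filter (n i j : nat) (s : seq nat) :
  selection T n i j s ->
  [/\ subset_of_size T i (filter T s),
      subset_of_size [pred x | in_range n x && ~~ T x] j (filter (predC T) s)
    & nonconsecutive (filter T s ++ filter (predC T) s)].
Proof.
case=> u r nc ci cj; split.
- by rewrite /subset_of_size filter_uniq // size_filter ci filter_all.
- rewrite /subset_of_size filter_uniq // size_filter cj; do 2!split=> //.
  apply/allP=> x; rewrite mem_filter /= => /andP[nT xs].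
  by rewrite nT (allP r).
- by apply: nonconsecutive_sub nc => x; rewrite mem_cat !mem_filter => /orP[] /andP[].
Qed.

End Selection.

Definition feasible0 (i j : nat) : bool := (i == 0) && (j == 0).

Definition feasible_step (t : bool) (f2 f1 : nat -> nat -> bool) (i j : nat) : bool :=
  f1 i j || (if t then (0 < i) && f2 i.-1 j else (0 < j) && f2 i j.-1).

Fixpoint feasible2 (T : pred nat) (n : nat) : (nat -> nat -> bool) * (nat -> nat -> bool) :=
  if n is n'.+1 then
    let f := feasible2 T n' in (f.2, feasible_step (T n) f.1 f.2)
  else (feasible0, feasible0).

Definition feasible (T : pred nat) (n : nat) : nat -> nat -> bool := (feasible2 T n).2.

Section Feasible.

Variable T : pred nat.

Lemma feasibleS (n i j : nat) :
  feasible T n.+1 i j = feasible_step (T n.+1) (feasible T n.-1) (feasible T n) i j.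
Proof. by case: n. Qed.

Lemma feasible_sound (n i j : nat) :
  feasible T n i j -> exists s, selection T n i j s.
Proof.
elim/ltn_ind: n i j => [[|n] IH] i j.
  by case/andP=> /eqP-> /eqP->; exists [::].
rewrite feasibleS /feasible_step.
case/orP=> [/IH[//|s sel]|]; first by exists s; apply: selection_widen.
have IHn2 k l : feasible T n.-1 k l -> exists s, selection T n.-1 k l s by apply: IH; lia.
case Tn: (T n.+1) => /andP[lt0 /IHn2[s sel]]; exists (n.+1 :: s);
  by move/selection_cons_top: sel; rewrite Tn /= ?add1n ?add0n (prednK lt0).
Qed.

Lemma feasible_complete (n i j : nat) (s : seq nat) :
  selection T n i j s -> feasible T n i j.
Proof.
elim/ltn_ind: n i j s => [[|n] IH] i j s sel.
  case: sel => _ r _ <- <-; case: s r => [|x s] //= /andP[].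
  by rewrite /in_range; lia.
rewrite feasibleS /feasible_step; case: (boolP (n.+1 \in s)) => ns; last first.
  by rewrite (IH n _ i j s (selection_narrow ns sel)).
have sel_rem := selection_perm (perm_to_rem ns) sel.
have [_ _ _ ci cj] := sel_rem; subst i j; rewrite /= in sel_rem *.
have /selection_cons_top/(IH n.-1) feasible_rem := sel_rem.
by case: (T n.+1); rewrite /= feasible_rem ?orbT //; lia.
Qed.

Lemma feasibleP (n i j : nat) :
  reflect (exists s, selection T n i j s) (feasible T n i j).
Proof.
by apply: (iffP idP) => [/feasible_sound | [s /feasible_complete]].
Qed.

End Feasible.

Definition table_of (f : nat -> nat -> bool) : seq bool :=
  [seq f i j | i <- iota 0 4, j <- iota 0 4].

Definition entry (v : seq bool) (i j : nat) : bool := nth false v (4 * i + j).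

(* Entry (i, j) of feasible_step only reads entries (i', j') <= (i, j), so the
   4 x 4 truncation commutes with the recurrence; state_ofS holds by computation. *)
Definition state := (nat * seq bool * seq bool)%type.

Definition state0 : state := (0, table_of feasible0, table_of feasible0).

Definition state_of (T : pred nat) (n : nat) : state :=
  (minn n 14, table_of (feasible2 T n).1, table_of (feasible2 T n).2).

Definition state_step (t : bool) (st : state) : state :=
  let: (k, v2, v1) := st in
  (minn k.+1 14, v1, table_of (feasible_step t (entry v2) (entry v1))).

Lemma state_ofS (T : pred nat) (n : nat) :
  state_of T n.+1 = state_step (T n.+1) (state_of T n).
Proof. rewrite /state_of /state_step /=; congr (_, _, _); lia. Qed.

(* The output is certified by reachable_closed, whatever the fuel. *)
Fixpoint explore (fuel : nat) (seen frontier : seq state) : seq state :=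
  if fuel is fuel'.+1 then
    let next := undup [seq st <- [seq state_step t st | st <- frontier, t <- [:: true; false]]
                      | st \notin seen] in
    explore fuel' (seen ++ next) next
  else seen.

Definition reachable : seq state :=
  Eval vm_compute in explore 20 [:: state0] [:: state0].

Lemma reachable_closed :
  all (fun st => (state_step true st \in reachable) && (state_step false st \in reachable))
      reachable.
Proof. by vm_compute. Qed.

Lemma state_of_reachable (T : pred nat) (n : nat) : state_of T n \in reachable.
Proof.
elim: n => [|n IH]; first by vm_compute.
rewrite state_ofS; have /andP[] := allP reachable_closed _ IH.
by case: (T n.+1).
Qed.

Definition state_ok (st : state) : bool :=
  let: (k, _, v) := st in (k == 14) ==> entry v 3 0 ==> entry v 0 3 ==> entry v 3 3.

Lemma reachable_ok : all state_ok reachable.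
Proof. by vm_compute. Qed.

Lemma feasible33 (T : pred nat) (m : nat) :
  14 <= m -> feasible T m 3 0 -> feasible T m 0 3 -> feasible T m 3 3.
Proof.
move=> m14; have := allP reachable_ok _ (state_of_reachable T m).
by rewrite /state_ok /state_of (minn_idPr m14) eqxx /= => /implyP h /h /implyP.
Qed.

Theorem proposition4p23 (m : nat) (T : pred nat) :
  14 <= m ->
  (forall x, T x -> in_range m x) ->
  (exists s, subset_of_size T 3 s /\ nonconsecutive s) ->
  (exists s, subset_of_size [pred x | in_range m x && ~~ T x] 3 s /\ nonconsecutive s) ->
  exists a b,
    subset_of_size T 3 a /\
    subset_of_size [pred x | in_range m x && ~~ T x] 3 b /\
    nonconsecutive (a ++ b).
Proof.
move=> m14 Tm [s [[us [ss sT]] ncs]] [t [[ut [st tU]] nct]].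
have f30 : feasible T m 3 0.
  apply/feasibleP; exists s; rewrite -ss; apply: selection_all => //.
  by apply/allP=> x /(allP sT) /Tm.
have f03 : feasible T m 0 3.
  apply/feasibleP; exists t; rewrite -st; apply/selection_predC/selection_all => //;
  by apply/allP=> x /(allP tU) /andP[].
have /feasibleP[u /selection_filter[Ta Tb nc]] := feasible33 m14 f30 f03.
by exists (filter T u), (filter (predC T) u).
Qed.
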